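(* Let $D\subset\mathbb R^n$ be a domain, $\theta\in(-\pi,\pi]$, and let $k\in C^2([0,1]\times D)$ satisfy the degenerate special Lagrangian equation $$\mathrm{Im}\big(e^{-\sqrt{-1}\theta}\det(I_n+\sqrt{-1}\nabla^2k)\big)=0,\qquad \mathrm{Re}\big(e^{-\sqrt{-1}\theta}\det(I+\sqrt{-1}\nabla_x^2k)\big)>0$$ at every point. Let $M(t,x)=\mathrm{Re}\big(e^{-\sqrt{-1}\theta}\mathrm{cof}(I_n+\sqrt{-1}\nabla^2k(t,x))\big)$, so that the linearization of $u\mapsto\mathrm{Im}(e^{-\sqrt{-1}\theta}\det(I_n+\sqrt{-1}\nabla^2u))$ at $k$ is $\psi\mapsto\mathrm{tr}(M\nabla^2\psi)$. Then at every point $(t,x)$ with $\nabla\dot k(t,x)\ne0$, the matrix $M(t,x)$ is positive semidefinite with exactly one zero eigenvalue and its null space is spanned by $\nabla\dot k(t,x)$; at every critical point of $\dot k$ (i.e. $\nabla\dot k(t,x)=0$), $M(t,x)$ is positive semidefinite with exactly one nonzero eigenvalue.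
   Context: Coordinates on $[0,1]\times D$ are $(t,x)$; $\nabla^2$ is the full $(n+1)\times(n+1)$ Hessian in $(t,x)$ (with $t$ as the $0$-th coordinate), $\nabla^2_x$ the $n\times n$ Hessian in $x$, $\dot k=\partial_tk$, and $\nabla\dot k$ its full gradient in $(t,x)$. $I_n=\mathrm{diag}(0,1,\dots,1)\in\mathrm{Sym}(\mathbb R^{n+1})$, $I$ the $n\times n$ identity, $\mathrm{cof}$ the cofactor matrix. *)

Set Warnings "-notation-overridden,-ambiguous-paths,-redundant-canonical-projection".
From HB Require Import structures.
From mathcomp Require Import all_boot all_order all_algebra.
From Stdlib Require Import Reals Lra ClassicalEpsilon FunctionalExtensionality.
Set Implicit Arguments.
Unset Strict Implicit.
Unset Printing Implicit Defensive.
Import GRing.Theory.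
Local Open Scope ring_scope.

Definition Req_bool (x y : R) : bool := if Req_EM_T x y then true else false.
Lemma Req_boolP : Equality.axiom Req_bool.
Proof. move=> x y; rewrite /Req_bool; case: Req_EM_T => h; constructor => //. Qed.
HB.instance Definition _ := hasDecEq.Build R Req_boolP.

Definition R_find (P : pred R) (_ : nat) : option R :=
  match excluded_middle_informative (exists x, P x) with
  | left h => Some (proj1_sig (constructive_indefinite_description _ h))
  | right _ => None
  end.
Lemma R_find_correct P n x : R_find P n = Some x -> P x.
Proof.
rewrite /R_find; case: excluded_middle_informative => // h [<-].
exact: proj2_sig (constructive_indefinite_description _ h).
Qed.
Lemma R_find_complete (P : pred R) : (exists x, P x) -> exists n, R_find P n.
Proof. move=> h; exists 0%N; rewrite /R_find; by case: excluded_middle_informative. Qed.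
Lemma R_find_ext (P Q : pred R) : P =1 Q -> R_find P =1 R_find Q.
Proof. by move=> /functional_extensionality ->. Qed.
HB.instance Definition _ := hasChoice.Build R R_find_correct R_find_complete R_find_ext.

Lemma R_addA : associative Rplus. Proof. move=> *; ring. Qed.
Lemma R_addC : commutative Rplus. Proof. move=> *; ring. Qed.
Lemma R_add0 : left_id R0 Rplus. Proof. move=> *; ring. Qed.
Lemma R_addN : left_inverse R0 Ropp Rplus. Proof. move=> *; ring. Qed.
HB.instance Definition _ := GRing.isZmodule.Build R R_addA R_addC R_add0 R_addN.

Lemma R_mulA : associative Rmult. Proof. move=> *; ring. Qed.
Lemma R_mulC : commutative Rmult. Proof. move=> *; ring. Qed.
Lemma R_mul1 : left_id R1 Rmult. Proof. move=> *; ring. Qed.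
Lemma R_mulDl : left_distributive Rmult Rplus. Proof. move=> *; ring. Qed.
Lemma R_one_neq0 : R1 != R0.
Proof. apply/eqP; exact: R1_neq_R0. Qed.
HB.instance Definition _ :=
  GRing.Zmodule_isComNzRing.Build R R_mulA R_mulC R_mul1 R_mulDl R_one_neq0.

Definition R_inv (x : R) : R := if Req_bool x R0 then R0 else Rinv x.
Lemma R_mulVf (x : R) : x != 0 -> R_inv x * x = 1.
Proof.
move=> /eqP hx; rewrite /R_inv; case: Req_boolP => // _.
exact: Rinv_l.
Qed.
Lemma R_inv0 : R_inv 0 = 0.
Proof. by rewrite /R_inv; case: Req_boolP. Qed.
HB.instance Definition _ := GRing.ComNzRing_isField.Build R R_mulVf R_inv0.

Record C := Cx { Re : R; Im : R }.

Definition C2RR (z : C) : R * R := (Re z, Im z).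
Definition RR2C (p : R * R) : C := Cx p.1 p.2.
Lemma C2RRK : cancel C2RR RR2C. Proof. by case. Qed.
HB.instance Definition _ := Choice.copy C (can_type C2RRK).

Definition C0 : C := Cx R0 R0.
Definition C1 : C := Cx R1 R0.
Definition Cadd (z w : C) : C := Cx (Rplus (Re z) (Re w)) (Rplus (Im z) (Im w)).
Definition Copp (z : C) : C := Cx (Ropp (Re z)) (Ropp (Im z)).
Definition Cmul (z w : C) : C :=
  Cx (Rminus (Rmult (Re z) (Re w)) (Rmult (Im z) (Im w)))
     (Rplus (Rmult (Re z) (Im w)) (Rmult (Im z) (Re w))).

Lemma C_addA : associative Cadd.
Proof. by case=> a b [c d] [e f]; rewrite /Cadd /=; f_equal; ring. Qed.
Lemma C_addC : commutative Cadd.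
Proof. by case=> a b [c d]; rewrite /Cadd /=; f_equal; ring. Qed.
Lemma C_add0 : left_id C0 Cadd.
Proof. by case=> a b; rewrite /Cadd /=; f_equal; ring. Qed.
Lemma C_addN : left_inverse C0 Copp Cadd.
Proof. by case=> a b; rewrite /Cadd /C0 /=; f_equal; ring. Qed.
HB.instance Definition _ := GRing.isZmodule.Build C C_addA C_addC C_add0 C_addN.

Lemma C_mulA : associative Cmul.
Proof. by case=> a b [c d] [e f]; rewrite /Cmul /=; f_equal; ring. Qed.
Lemma C_mulC : commutative Cmul.
Proof. by case=> a b [c d]; rewrite /Cmul /=; f_equal; ring. Qed.
Lemma C_mul1 : left_id C1 Cmul.
Proof. by case=> a b; rewrite /Cmul /C1 /=; f_equal; ring. Qed.
Lemma C_mulDl : left_distributive Cmul Cadd.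
Proof. by case=> a b [c d] [e f]; rewrite /Cmul /Cadd /=; f_equal; ring. Qed.
Lemma C_one_neq0 : C1 != C0 :> C.
Proof. apply/eqP => h; case: h => h; exact: R1_neq_R0 h. Qed.
HB.instance Definition _ :=
  GRing.Zmodule_isComNzRing.Build C C_mulA C_mulC C_mul1 C_mulDl C_one_neq0.

Definition RtoC (r : R) : C := Cx r R0.
Definition iC : C := Cx R0 R1.
Definition expi (t : R) : C := Cx (cos t) (sin t).

Definition cofmx (m : nat) (A : 'M[C]_m) : 'M[C]_m := \matrix_(i, j) cofactor A i j.

(* I_n = diag(0,1,...,1) in Sym(R^{n+1}), as a complex matrix. *)
Definition In_mx (n : nat) : 'M[C]_(n.+1) :=
  \matrix_(i, j) (if (i == j) && (i != ord0) then 1 else 0).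

Definition plus_iH (m : nat) (P : 'M[C]_m) (H : 'M[R]_m) : 'M[C]_m :=
  P + map_mx (fun r => iC * RtoC r) H.

Definition xblock (n : nat) (H : 'M[R]_(n.+1)) : 'M[R]_n :=
  \matrix_(i, j) H (lift ord0 i) (lift ord0 j).

Definition linM (n : nat) (theta : R) (H : 'M[R]_(n.+1)) : 'M[R]_(n.+1) :=
  \matrix_(i, j) Re (expi (Ropp theta) * cofmx (plus_iH (In_mx n) H) i j).

Definition psd (m : nat) (M : 'M[R]_m) : Prop :=
  forall w : 'cV[R]_m, Rle R0 ((w^T *m M *m w) ord0 ord0).

(* Analysis on [0,1] x D, points z : 'I_(n+1) -> R with z 0 = t       *)

Definition pt (m : nat) := 'I_m -> R.

Definition Rball (m : nat) (x : pt m) (r : R) (y : pt m) : Prop :=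
  forall i, Rlt (Rabs (Rminus (y i) (x i))) r.

Definition is_open (m : nat) (U : pt m -> Prop) : Prop :=
  forall x, U x -> exists r, Rlt R0 r /\ forall y, Rball x r y -> U y.

Definition is_connected (m : nat) (D : pt m -> Prop) : Prop :=
  forall U V : pt m -> Prop, is_open U -> is_open V ->
    (forall x, D x -> U x \/ V x) ->
    (exists x, D x /\ U x) -> (exists x, D x /\ V x) ->
    exists x, D x /\ U x /\ V x.

Definition is_domain (m : nat) (D : pt m -> Prop) : Prop :=
  (exists x, D x) /\ is_open D /\ is_connected D.

Definition Omega (n : nat) (D : pt n -> Prop) (z : pt n.+1) : Prop :=
  Rle R0 (z ord0) /\ Rle (z ord0) R1 /\ D (fun i => z (lift ord0 i)).

Definition upd (m : nat) (z : pt m) (i : 'I_m) (h : R) : pt m :=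
  fun j => if j == i then Rplus (z j) h else z j.

(* l is the partial derivative of f in direction i at z, within the set S
   (one-sided at boundary points of S) *)
Definition is_partial (m : nat) (S : pt m -> Prop) (f : pt m -> R) (i : 'I_m)
    (z : pt m) (l : R) : Prop :=
  forall eps, Rlt R0 eps -> exists delta, Rlt R0 delta /\
    forall h, h <> R0 -> Rlt (Rabs h) delta -> S (upd z i h) ->
      Rlt (Rabs (Rminus (Rdiv (Rminus (f (upd z i h)) (f z)) h) l)) eps.

Definition cont_on (m : nat) (S : pt m -> Prop) (f : pt m -> R) : Prop :=
  forall z, S z -> forall eps, Rlt R0 eps -> exists delta, Rlt R0 delta /\
    forall w, S w -> Rball z delta w -> Rlt (Rabs (Rminus (f w) (f z))) eps.

(* k is C^2 on S, with first partials Dk i = d_i k and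
   second partials D2k i j = d_i (d_j k), all continuous on S *)
Definition C2_on (m : nat) (S : pt m -> Prop) (k : pt m -> R)
    (Dk : 'I_m -> pt m -> R) (D2k : 'I_m -> 'I_m -> pt m -> R) : Prop :=
  cont_on S k /\
  (forall i, cont_on S (Dk i)) /\
  (forall i j, cont_on S (D2k i j)) /\
  (forall i z, S z -> is_partial S k i z (Dk i z)) /\
  (forall i j z, S z -> is_partial S (Dk j) i z (D2k i j z)).

Definition hess (m : nat) (D2k : 'I_m -> 'I_m -> pt m -> R) (z : pt m) : 'M[R]_m :=
  \matrix_(i, j) D2k i j z.

(* the full gradient of kdot = d_t k = Dk 0:  (d_j (d_0 k))_j *)
Definition grad_kdot (n : nat) (D2k : 'I_n.+1 -> 'I_n.+1 -> pt n.+1 -> R)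
    (z : pt n.+1) : 'cV[R]_(n.+1) :=
  \col_j D2k j ord0 z.

(* Write H for the (symmetric, by Clairaut) Hessian of k, N = I_n + iH, M = Re(e^{-i theta} cof N)
   = Re(e^{-i theta} adj N) and lambda = Re(e^{-i theta} det N), which is e^{-i theta} det N itself
   by the equation. For real w let e^{-i theta} adj N w = p + iq; then p = Mw and N(p + iq) = lambda w,
   i.e. lambda w = I_n p - Hq and I_n q + Hp = 0, whence lambda w^T M w = |p'|^2 + |q'|^2, where x'
   drops the t-coordinate. As N e_0 = i grad(kdot), the vector e^{-i theta} adj N grad(kdot) is purely
   imaginary, so M grad(kdot) = 0. If grad(kdot) <> 0, then |p'|^2 + |q'|^2 = 0 forces p = 0 and
   lambda w in R grad(kdot); with M_00 = Re(e^{-i theta} det(I + i H_x)) > 0 this yields lambda > 0,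
   hence M >= 0 with kernel R grad(kdot), and then M + grad(kdot) grad(kdot)^T is invertible, which
   makes 0 a simple root of the characteristic polynomial of M. If grad(kdot) = 0, the first row and
   column of N vanish, so only the (0,0) cofactor survives and M = M_00 e_0 e_0^T. *)

From Pilot Require Import Defs.
Set Warnings "-notation-overridden,-ambiguous-paths,-redundant-canonical-projection".
From HB Require Import structures.
From mathcomp Require Import all_boot all_order all_algebra.
From Stdlib Require Import Reals Lra FunctionalExtensionality.
Set Implicit Arguments.
Unset Strict Implicit.
Unset Printing Implicit Defensive.
Import GRing.Theory.
Local Open Scope ring_scope.

Section RealPartials.
Local Open Scope R_scope.

Lemma upd_upd m (w : pt m) i s h : upd (upd w i s) i h = upd w i (s + h).
Proof.
by apply: functional_extensionality => l; rewrite /upd; case: (l == i) => //=; ring.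
Qed.

Lemma updC m (w : pt m) i j s u : i != j ->
  upd (upd w i s) j u = upd (upd w j u) i s.
Proof.
move=> ij; apply: functional_extensionality => l; rewrite /upd.
by have [->|//] := eqVneq l j; rewrite eq_sym (negPf ij).
Qed.

Lemma upd0 m (w : pt m) i : upd w i 0 = w.
Proof.
by apply: functional_extensionality => l; rewrite /upd; case: (l == i) => //=; ring.
Qed.

Lemma Rball_refl m (z : pt m) r : 0 < r -> Rball z r z.
Proof. by move=> hr l; rewrite Rminus_diag Rabs_R0. Qed.

Lemma Rball_upd2 m (z : pt m) i j r s u : i != j -> 0 < r -> Rabs s < r -> Rabs u < r ->
  Rball z r (upd (upd z i s) j u).
Proof.
move=> ij hr hs hu l; rewrite /upd.
have [->|_] := eqVneq l j; first by rewrite eq_sym (negPf ij) Rplus_minus_l.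
by case: (l == i); rewrite ?Rplus_minus_l // Rminus_diag Rabs_R0.
Qed.

Lemma is_partial_derivable m (S : pt m -> Prop) (f : pt m -> R) i (w : pt m) s l rho :
  0 < rho -> (forall h, Rabs h < rho -> S (upd w i (s + h))) ->
  is_partial S f i (upd w i s) l ->
  derivable_pt_lim (fun s' => f (upd w i s')) s l.
Proof.
move=> hrho hS hp eps heps.
have [d [hd H]] := hp eps heps.
have hm : 0 < Rmin d rho by apply: Rmin_pos.
exists (mkposreal _ hm) => h hne hlt /=.
rewrite -upd_upd; apply: H => //.
  exact: Rlt_le_trans hlt (Rmin_l _ _).
by rewrite upd_upd; apply: hS; apply: Rlt_le_trans hlt (Rmin_r _ _).
Qed.

Lemma eq_of_cont_near m (S : pt m -> Prop) (f g : pt m -> R) z :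
  cont_on S f -> cont_on S g -> S z ->
  (forall d, 0 < d -> exists w1 w2, [/\ S w1, S w2, Rball z d w1, Rball z d w2 & f w1 = g w2]) ->
  f z = g z.
Proof.
move=> cf cg Sz near; apply: cond_eq => eps heps.
have heps2 : 0 < eps / 2 by lra.
have [d1 [hd1 C1]] := cf z Sz _ heps2.
have [d2 [hd2 C2]] := cg z Sz _ heps2.
have [w1 [w2 [S1 S2 B1 B2 E]]] := near _ (Rmin_pos _ _ hd1 hd2).
have F1 := C1 w1 S1 (fun l => Rlt_le_trans _ _ _ (B1 l) (Rmin_l _ _)).
have F2 := C2 w2 S2 (fun l => Rlt_le_trans _ _ _ (B2 l) (Rmin_r _ _)).
rewrite E Rabs_minus_sym in F1.
have := Rabs_triang (f z - g w2) (g w2 - g z).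
have -> : f z - g w2 + (g w2 - g z) = f z - g z by ring.
lra.
Qed.

Section MixedPartials.
Variables (m : nat) (S : pt m -> Prop) (k : pt m -> R).
Variables (Dk : 'I_m -> pt m -> R) (D2k : 'I_m -> 'I_m -> pt m -> R).
Hypothesis k_C2 : C2_on S k Dk D2k.

Lemma second_difference_mvt (z : pt m) r i j t :
  0 < r -> (forall y, Rball z r y -> S y) -> i != j -> 0 < t -> t < r / 2 ->
  exists c d, [/\ 0 < c < t, 0 < d < t &
    k (upd (upd z i t) j t) - k (upd z i t) - k (upd z j t) + k z
      = D2k j i (upd (upd z i c) j d) * (t * t)].
Proof.
move=> hr hB ij ht htr.
case: k_C2 => _ [_ [_ [Hk HD]]].
have hr2 : 0 < r / 2 by lra.
have small x : 0 <= x <= t -> Rabs x < r by move=> hx; rewrite Rabs_right; lra.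
have shifted x h : 0 <= x <= t -> Rabs h < r / 2 -> Rabs (x + h) < r.
  move=> hx hh; apply: Rle_lt_trans (Rabs_triang _ _) _; rewrite Rabs_right; lra.
have inS s u : Rabs s < r -> Rabs u < r -> S (upd (upd z i s) j u).
  by move=> hs hu; apply/hB/Rball_upd2.
have d_i u c : 0 <= u <= t -> 0 <= c <= t ->
    derivable_pt_lim (fun s => k (upd (upd z i s) j u)) c (Dk i (upd (upd z i c) j u)).
  move=> hu hc.
  have -> : (fun s => k (upd (upd z i s) j u)) = (fun s => k (upd (upd z j u) i s)).
    by apply: functional_extensionality => s; rewrite updC.
  rewrite updC //; apply: (is_partial_derivable (S := S) hr2).
    by move=> h hh; rewrite -updC //; apply: inS; auto.
  by rewrite -updC //; apply/Hk/inS; auto.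
have [c [ec hc]] := MVT_cor2
  (fun s => k (upd (upd z i s) j t) - k (upd (upd z i s) j 0))
  (fun c => Dk i (upd (upd z i c) j t) - Dk i (upd (upd z i c) j 0)) 0 t ht
  (fun c hc => derivable_pt_lim_minus _ _ _ _ _
                 (d_i t c ltac:(lra) hc) (d_i 0 c ltac:(lra) hc)).
have d_j u : 0 <= u <= t -> derivable_pt_lim (fun u => Dk i (upd (upd z i c) j u)) u
                                               (D2k j i (upd (upd z i c) j u)).
  move=> hu; apply: (is_partial_derivable (S := S) hr2).
    by move=> h hh; apply: inS; [apply: small; lra | exact: shifted].
  by apply/HD/inS; apply: small; lra.
have [d [ed hd]] := MVT_cor2 _ _ 0 t ht d_j.
exists c, d; split=> //.
by move: ec; rewrite /= ed !upd0 !Rminus_0_r Rmult_assoc; lra.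
Qed.

(* The second difference is symmetric in i and j, so the two mixed partials agree at nearby points. *)
Lemma mixed_partials_sym_ball (z : pt m) r i j :
  0 < r -> (forall y, Rball z r y -> S y) -> D2k i j z = D2k j i z.
Proof.
move=> hr hB; have [->|ij] := eqVneq i j; first by [].
have [_ [_ [cD2 _]]] := k_C2.
apply: (eq_of_cont_near (cD2 i j) (cD2 j i) (hB _ (Rball_refl z hr))) => d hd.
pose t := Rmin d (r / 2) / 2.
have [ht htd htr] : [/\ 0 < t, t < d & t < r / 2].
  have := Rmin_l d (r / 2); have := Rmin_r d (r / 2).
  have : 0 < Rmin d (r / 2) by apply: Rmin_pos; lra.
  rewrite /t; split; lra.
have ji : j != i by rewrite eq_sym.
have [c1 [d1 [hc1 hd1 e1]]] := second_difference_mvt hr hB ij ht htr.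
have [c2 [d2 [hc2 hd2 e2]]] := second_difference_mvt hr hB ji ht htr.
rewrite !(@updC _ z j i) // in e2.
have near_z x y rho : 0 < x < t -> 0 < y < t -> t <= rho ->
    Rball z rho (upd (upd z i x) j y).
  by move=> hx hy hrho; apply: Rball_upd2 => //; try rewrite Rabs_right; lra.
exists (upd (upd z i d2) j c2), (upd (upd z i c1) j d1); split.
- by apply/hB/near_z => //; lra.
- by apply/hB/near_z => //; lra.
- by apply: near_z => //; lra.
- by apply: near_z => //; lra.
- apply: (Rmult_eq_reg_r (t * t)); first by rewrite -e1 -e2; ring.
  by apply: Rmult_integral_contrapositive; lra.
Qed.

End MixedPartials.

Lemma Omega_interior_near n (D : pt n -> Prop) (z : pt n.+1) d :
  is_open D -> Omega D z -> 0 < d ->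
  exists z' r, [/\ Rball z d z', 0 < r & forall y, Rball z' r y -> Omega D y].
Proof.
move=> oD [z0 [z1 Dx]] hd.
have [rD [hrD BD]] := oD _ Dx.
pose eta := Rmin d (1 / 2) / 2.
have [he hed he4] : [/\ 0 < eta, eta < d & eta <= 1 / 4].
  have := Rmin_l d (1 / 2); have := Rmin_r d (1 / 2).
  have : 0 < Rmin d (1 / 2) by apply: Rmin_pos; lra.
  rewrite /eta; split; lra.
have [h [hz hz' habs]] : exists h, [/\ 0 < z ord0 + h, z ord0 + h < 1 & Rabs h < d].
  have [hz|hz] := Rle_lt_dec (z ord0) (1 / 2).
    by exists eta; rewrite Rabs_right; [split|]; lra.
  by exists (- eta); rewrite Rabs_left; [split|]; lra.
pose r := Rmin rD (Rmin (z ord0 + h) (1 - (z ord0 + h))).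
have [hr r1 r2 r3] : [/\ 0 < r, r <= rD, r <= z ord0 + h & r <= 1 - (z ord0 + h)].
  split; first by apply: Rmin_pos => //; apply: Rmin_pos; lra.
  - exact: Rmin_l.
  - exact: Rle_trans (Rmin_r _ _) (Rmin_l _ _).
  - exact: Rle_trans (Rmin_r _ _) (Rmin_r _ _).
have lift_neq0 (l : 'I_n) : (lift ord0 l == ord0) = false by rewrite eq_sym (negPf (neq_lift _ _)).
exists (upd z ord0 h), r; split => //.
- move=> l; rewrite /upd; case: (l == ord0); first by rewrite Rplus_minus_l.
  by rewrite Rminus_diag Rabs_R0; lra.
- move=> y By; have := By ord0; rewrite /upd eqxx => /Rabs_def2 [? ?].
  split; [lra | split; first lra].
  by apply: BD => l; have := By (lift ord0 l); rewrite /upd lift_neq0; lra.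
Qed.

(* At t = 0 or t = 1 the derivatives are one-sided; symmetry there follows by continuity from
   nearby points in the interior. *)
Lemma mixed_partials_sym_Omega n (D : pt n -> Prop) k Dk D2k z i j :
  is_open D -> C2_on (Omega D) k Dk D2k -> Omega D z -> D2k i j z = D2k j i z.
Proof.
move=> oD k_C2 Oz; have [_ [_ [cD2 _]]] := k_C2.
apply: (eq_of_cont_near (cD2 i j) (cD2 j i) Oz) => d hd.
have [z' [r [Bz' hr Br]]] := Omega_interior_near oD Oz hd.
have Oz' := Br _ (Rball_refl z' hr).
by exists z', z'; split => //; exact: (mixed_partials_sym_ball k_C2 i j hr Br).
Qed.

End RealPartials.

(* A bare [C] would be Stdlib's binomial coefficient. *)
Local Notation C := Defs.C.

Lemma Re_sum (I : finType) (F : I -> C) : Re (\sum_i F i) = \sum_i Re (F i).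
Proof. exact: big_morph. Qed.

Lemma Im_sum (I : finType) (F : I -> C) : Im (\sum_i F i) = \sum_i Im (F i).
Proof. exact: big_morph. Qed.

Lemma Re_mulmx m n p (A : 'M[C]_(m, n)) (B : 'M[C]_(n, p)) :
  map_mx Re (A *m B) = map_mx Re A *m map_mx Re B - map_mx Im A *m map_mx Im B.
Proof.
by apply/matrixP=> i j; rewrite !mxE Re_sum -sumrB; apply: eq_bigr => l _; rewrite !mxE.
Qed.

Lemma Im_mulmx m n p (A : 'M[C]_(m, n)) (B : 'M[C]_(n, p)) :
  map_mx Im (A *m B) = map_mx Re A *m map_mx Im B + map_mx Im A *m map_mx Re B.
Proof.
by apply/matrixP=> i j; rewrite !mxE Im_sum -big_split; apply: eq_bigr => l _; rewrite !mxE.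
Qed.

Lemma Re_mul_real m n (A : 'M[C]_(m, n)) (w : 'cV[R]_n) :
  map_mx Re (A *m map_mx RtoC w) = map_mx Re A *m w.
Proof.
apply/matrixP=> i j; rewrite !mxE Re_sum; apply: eq_bigr => l _; rewrite !mxE /=.
by cbn; ring.
Qed.

Lemma Re_iC_mul (x : C) : Re x = Im (iC * x).
Proof. by case: x => a b /=; cbn; ring. Qed.

Lemma C_real (x : C) : Im x = 0 -> x = RtoC (Re x).
Proof. by case: x => a b /= ->. Qed.

Lemma Im_mul_natr (x : C) (b : bool) : Im (x * b%:R) = Im x * b%:R.
Proof. by case: x b => a c []; rewrite /= ?mulr1 ?mulr0; cbn; ring. Qed.

Section CharPoly.
Variable F : fieldType.

Lemma char_poly_similar m (A S S' : 'M[F]_m) : S' *m S = 1%:M ->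
  char_poly (S' *m A *m S) = char_poly A.
Proof.
move=> SK; have KS : S *m S' = 1%:M by apply: mulmx1C.
have polyC_inv : map_mx polyC S' *m map_mx polyC S = 1%:M by rewrite -map_mxM SK map_mx1.
rewrite /char_poly.
have -> : char_poly_mx (S' *m A *m S) = map_mx polyC S' *m char_poly_mx A *m map_mx polyC S.
  rewrite /char_poly_mx mulmxBr mulmxBl !map_mxM; congr (_ - _).
  by rewrite scalar_mxC -mulmxA polyC_inv mulmx1.
by rewrite !det_mulmx mulrC mulrA -det_mulmx -map_mxM KS map_mx1 det1 mul1r.
Qed.

Lemma char_poly_eigen_delta m (T : 'M[F]_m.+1) (k : 'I_m.+1) (a : F) :
  T *m delta_mx k (0 : 'I_1) = a *: delta_mx k 0 ->
  char_poly T = ('X - a%:P) * char_poly (row' k (col' k T)).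
Proof.
move=> Tk; have colk i : T i k = a * (i == k)%:R.
  by have := congr1 (fun B : 'cV_m.+1 => B i 0) Tk; rewrite -colE !mxE eqxx andbT.
rewrite /char_poly (expand_det_col _ k) (bigD1 k) //= big1 ?addr0.
  rewrite /cofactor -signr_odd addnn odd_double expr0 mul1r row'_col'_char_poly_mx.
  by rewrite !mxE eqxx colk eqxx mulr1 mulr1n.
by move=> i ik; rewrite !mxE colk (negPf ik) mulr0 mulr0n subr0 mul0r.
Qed.

Lemma similar_delta_col m (v : 'cV[F]_m) (k : 'I_m) : v k 0 != 0 ->
  exists S S' : 'M[F]_m, S' *m S = 1%:M /\ S *m delta_mx k (0 : 'I_1) = v.
Proof.
move=> vk; set e : 'cV[F]_m := delta_mx k 0; set U := (v - e) *m e^T.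
have ee : e^T *m e = 1%:M.
  by rewrite /e trmx_delta mul_delta_mx; apply/matrixP=> i j; rewrite !ord1 !mxE.
have UU : U *m U = (v k 0 - 1) *: U.
  have eU : e^T *m (v - e) = (v k 0 - 1)%:M.
    rewrite /e trmx_delta -rowE [LHS]mx11_scalar; congr (_%:M).
    by rewrite !mxE !eqxx.
  by rewrite /U mulmxA -(mulmxA (v - e)) eU mul_mx_scalar -scalemxAl.
exists (1%:M + U), (1%:M - (v k 0)^-1 *: U); split.
  rewrite mulmxDr mulmx1 mulmxBl mul1mx -scalemxAl UU scalerA mulrBr mulr1 mulVf //.
  by rewrite scalerBl scale1r opprB [U + _]addrC !subrK.
by rewrite mulmxDl mul1mx /U -mulmxA ee mulmx1 addrC subrK.
Qed.

(* Conjugating by S with S e_k = v makes e_k an eigenvector of both M and M + v u^T, and the two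
   conjugates then share the minor obtained by deleting row and column k. *)
Lemma mup0_char_poly_eq1 m (M : 'M[F]_m.+1) (v u : 'cV[F]_m.+1) :
  v != 0 -> M *m v = 0 -> \det (M + v *m u^T) != 0 -> mup 0 (char_poly M) = 1%N.
Proof.
move=> v0 Mv dM.
have [k vk] : exists k, v k 0 != 0.
  apply/existsP; apply: contraR v0 => /existsPn v0.
  by apply/eqP/matrixP => i j; rewrite ord1 mxE; apply/eqP; rewrite -[_ == _]negbK v0.
have [S [S' [SK Se]]] := similar_delta_col vk.
set e : 'cV[F]_m.+1 := delta_mx k 0.
set T := S' *m M *m S; set T' := S' *m (M + v *m u^T) *m S.
have S'v : S' *m v = e by rewrite -Se mulmxA SK mul1mx.
have Te : T *m e = 0 *: e by rewrite scale0r /T -mulmxA Se -mulmxA Mv mulmx0.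
set mu := (u^T *m v) 0 0.
have T'e : T' *m e = mu *: e.
  rewrite /T' -mulmxA Se -mulmxA mulmxDl Mv add0r -mulmxA [u^T *m v]mx11_scalar -/mu.
  by rewrite mul_mx_scalar -scalemxAr S'v.
have minorE : row' k (col' k T') = row' k (col' k T).
  apply/matrixP => i j; rewrite /T' mulmxDr mulmxDl mulmxA S'v !mxE.
  rewrite [X in _ + X]big1 ?addr0 // => l _.
  by rewrite mxE big_ord1 mxE eq_sym (negPf (neq_lift _ _)) !mul0r.
have cM : char_poly M = 'X * char_poly (row' k (col' k T)).
  by rewrite -(char_poly_similar M SK) (char_poly_eigen_delta Te) subr0.
have cM' : char_poly (M + v *m u^T) = ('X - mu%:P) * char_poly (row' k (col' k T)).
  by rewrite -(char_poly_similar _ SK) (char_poly_eigen_delta T'e) minorE.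
rewrite cM mupMl; first by rewrite -['X]expr1 -['X]subr0 mup_XsubCX eqxx.
apply: contra dM => /rootP minor0; apply/eqP.
have := congr1 (horner^~ 0) cM'; rewrite hornerM minor0 mulr0 horner_coef0 char_poly_det.
by move/eqP; rewrite mulf_eq0 signr_eq0 => /eqP.
Qed.

Lemma mup0_char_poly_scale_delta m (c : F) : c != 0 ->
  mup 0 (char_poly (c *: delta_mx ord0 ord0 : 'M[F]_m.+1)) = m.
Proof.
move=> c0.
have Te : (c *: delta_mx ord0 ord0 : 'M[F]_m.+1) *m delta_mx ord0 (0 : 'I_1)
            = c *: delta_mx ord0 0 by rewrite -scalemxAl mul_delta_mx.
have minor0 : row' ord0 (col' ord0 (c *: delta_mx ord0 ord0)) = 0 :> 'M[F]_m.
  by apply/matrixP => i j; rewrite !mxE eq_sym (negPf (neq_lift _ _)) mulr0.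
rewrite (char_poly_eigen_delta Te) minor0 mupMr ?root_XsubC 1?eq_sym //.
rewrite /char_poly /char_poly_mx map_mx0 subr0 det_scalar -['X]subr0 -polyC0.
by rewrite mup_XsubCX eqxx.
Qed.

End CharPoly.

Lemma cofactor_eq0_row (F : comNzRingType) m (A : 'M[F]_m.+1) r i j :
  r != i -> (forall c, A r c = 0) -> cofactor A i j = 0.
Proof.
move=> ri Ar; have [r' rE|rEi] := unliftP i r; last by rewrite rEi eqxx in ri.
rewrite /cofactor (expand_det_row _ r') big1 ?mulr0 // => c _.
by rewrite !mxE -rE Ar mul0r.
Qed.

Lemma sumsq_ge0 (I : finType) (P : pred I) (f : I -> R) : Rle 0 (\sum_(i | P i) f i ^+ 2).
Proof.
apply: (big_ind (Rle 0)) => [|a b|i _]; first exact: Rle_refl.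
  exact: Rplus_le_le_0_compat.
by rewrite expr2; apply: Rle_0_sqr.
Qed.

Lemma sumsq_eq0 (I : finType) (f : I -> R) : \sum_i f i ^+ 2 = 0 -> forall i, f i = 0.
Proof.
move=> h i; move: h; rewrite (bigD1 i) //=.
have := sumsq_ge0 (predC1 i) f; rewrite expr2.
by move: (\sum_(j | _) _) => s hs; cbn => h; nra.
Qed.

Lemma trmx_mul_self_eq0 m (v : 'cV[R]_m) : (v^T *m v) 0 0 = 0 -> v = 0.
Proof.
rewrite mxE => h; apply/matrixP => i j; rewrite ord1 mxE.
apply: (sumsq_eq0 (f := fun l => v l 0)); rewrite -[RHS]h.
by apply: eq_bigr => l _; rewrite mxE expr2.
Qed.

Lemma psd_ker_det_add m (M : 'M[R]_m) (v : 'cV[R]_m) :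
  M^T = M -> psd M -> v != 0 -> (forall w, M *m w = 0 -> exists c, w = c *: v) ->
  \det (M + v *m v^T) != 0.
Proof.
move=> Ms psdM v0 ker; apply/negP => /det0P [u u0 uM].
set w := u^T; set a := (v^T *m w) 0 0.
have M'w : (M + v *m v^T) *m w = 0.
  by have := congr1 trmx uM; rewrite trmx_mul linearD /= trmx_mul trmxK Ms trmx0.
have Mw : M *m w = - (a *: v).
  apply/eqP; rewrite -addr_eq0 -M'w mulmxDl -mulmxA [v^T *m w]mx11_scalar.
  by rewrite mul_mx_scalar.
have a0 : a = 0.
  have := psdM w; rewrite -mulmxA Mw mulmxN -scalemxAr mxE mxE.
  have -> : (w^T *m v) 0 0 = a by rewrite /a -[w^T *m v]trmxK trmx_mul trmxK mxE.
  by cbn => h; nra.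
have [c wc] : exists c, w = c *: v by apply: ker; rewrite Mw a0 scale0r oppr0.
have : a = c * (v^T *m v) 0 0 by rewrite /a wc -scalemxAr mxE.
rewrite a0 => /esym/eqP; rewrite mulf_eq0 => /orP [/eqP c0|/eqP/trmx_mul_self_eq0 v00].
  by move: u0; rewrite -[u]trmxK -/w wc c0 scale0r trmx0 eqxx.
by rewrite v00 eqxx in v0.
Qed.

Lemma psd_scale_delta m (c : R) (k : 'I_m) : Rle 0 c -> psd (c *: delta_mx k k).
Proof.
move=> c0 w; rewrite -scalemxAr -scalemxAl mxE -(mul_delta_mx (0 : 'I_1)).
rewrite mulmxA -colE -mulmxA -rowE mxE big_ord1 !mxE.
by move: (w k 0) => x; cbn; nra.
Qed.

Definition In_real n : 'M[R]_(n.+1) := diag_mx (\row_(i < n.+1) (i != ord0)%:R).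

Definition xnorm2 n (x : 'cV[R]_(n.+1)) : R := \sum_(i < n) x (lift ord0 i) 0 ^+ 2.

Lemma quad_In_real n (x : 'cV[R]_(n.+1)) : (x^T *m In_real n *m x) 0 0 = xnorm2 x.
Proof.
rewrite -mulmxA mul_diag_mx !mxE big_ord_recl !mxE eqxx mul0r mulr0 add0r.
by apply: eq_bigr => i _; rewrite !mxE mul1r expr2.
Qed.

Lemma xnorm2_ge0 n (x : 'cV[R]_(n.+1)) : Rle 0 (xnorm2 x).
Proof. exact: sumsq_ge0. Qed.

Lemma Re_plus_iH n (H : 'M[R]_(n.+1)) : map_mx Re (plus_iH (In_mx n) H) = In_real n.
Proof.
apply/matrixP=> i j; rewrite !mxE.
by have [->|_] := eqVneq i j; [case: (j != ord0) |]; rewrite /= ?mulr1n ?mulr0n; cbn; ring.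
Qed.

Lemma Im_plus_iH n (H : 'M[R]_(n.+1)) : map_mx Im (plus_iH (In_mx n) H) = H.
Proof. by apply/matrixP=> i j; rewrite !mxE; case: (_ && _); cbn; ring. Qed.

Lemma plus_iH_sym n (H : 'M[R]_(n.+1)) : H^T = H ->
  (plus_iH (In_mx n) H)^T = plus_iH (In_mx n) H.
Proof.
move=> Hs; apply/matrixP=> i j; rewrite !mxE -[in H j i]Hs mxE.
by have [->|ne] := eqVneq i j; rewrite ?eqxx // eq_sym (negPf ne).
Qed.

Section RealSystem.
Variables (n : nat) (H : 'M[R]_(n.+1)) (lam : R) (w p q : 'cV[R]_(n.+1)).
Hypothesis H_sym : H^T = H.
Hypothesis Re_eq : lam *: w = In_real n *m p - H *m q.
Hypothesis Im_eq : In_real n *m q + H *m p = 0.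

Lemma real_system_quad : lam * (w^T *m p) 0 0 = xnorm2 p + xnorm2 q.
Proof.
have Hp : H *m p = - (In_real n *m q) by apply/eqP; rewrite -addr_eq0 addrC Im_eq.
have Ir_sym : (In_real n)^T = In_real n by rewrite tr_diag_mx.
have -> : lam * (w^T *m p) 0 0 = ((lam *: w)^T *m p) 0 0.
  by rewrite linearZ /= -scalemxAl [RHS]mxE.
rewrite -!quad_In_real Re_eq.
rewrite linearB /= !trmx_mul Ir_sym H_sym mulmxBl -!mulmxA Hp mulmxN opprK.
by rewrite !mulmxA mxE.
Qed.

Lemma real_system_xnorm2_eq0 : \col_j H j ord0 != 0 -> xnorm2 p + xnorm2 q = 0 ->
  p = 0 /\ lam *: w = - q 0 0 *: \col_j H j ord0.
Proof.
move=> v0 h.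
have [p0 q0] : xnorm2 p = 0 /\ xnorm2 q = 0.
  by have := xnorm2_ge0 p; have := xnorm2_ge0 q; move: h; cbn; lra.
have first_coord x : xnorm2 x = 0 ->
    In_real n *m x = 0 /\ H *m x = x 0 0 *: \col_j H j ord0.
  move=> /sumsq_eq0 x0; split; apply/matrixP=> i j; rewrite ?ord1.
    rewrite mul_diag_mx !mxE.
    by case: (unliftP ord0 i) => [i'|] -> /=; rewrite ?x0 ?mulr0 ?eqxx ?mul0r.
  rewrite !mxE big_ord_recl big1 ?addr0 1?mulrC // => l _.
  by rewrite x0 mulr0.
have [Ip Hp] := first_coord _ p0; have [Iq Hq] := first_coord _ q0.
have p00 : p 0 0 = 0.
  move: Im_eq; rewrite Iq Hp add0r => /eqP; rewrite scalemx_eq0 (negPf v0) orbF.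
  by move/eqP.
split; last by rewrite Re_eq Ip Hq sub0r scaleNr.
apply/matrixP=> i j; rewrite ord1 mxE.
by case: (unliftP ord0 i) => [i'|] ->; [exact: (sumsq_eq0 p0) | exact: p00].
Qed.

End RealSystem.

Section LinearizedOperator.
Variables (n : nat) (theta : R) (H : 'M[R]_(n.+1)).
Hypothesis H_sym : H^T = H.
Local Notation N := (plus_iH (In_mx n) H).
Local Notation M := (linM theta H).
Local Notation v := (\col_j H j ord0).
Local Notation eN := (expi (Ropp theta) * \det N).

Lemma linM_adj : M = map_mx Re (expi (Ropp theta) *: \adj N).
Proof. by apply/matrixP=> i j; rewrite !mxE -cofactor_tr plus_iH_sym. Qed.

Lemma linM_sym : M^T = M.
Proof. by apply/matrixP=> i j; rewrite !mxE -cofactor_tr plus_iH_sym. Qed.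

Lemma linM00 : M ord0 ord0 = Re (expi (Ropp theta) * \det (plus_iH 1%:M (xblock H))).
Proof.
rewrite !mxE /cofactor expr0 mul1r; congr (Re (_ * \det _)).
apply/matrixP=> i j; have l0 : lift ord0 i != ord0 by rewrite eq_sym neq_lift.
by rewrite !mxE (inj_eq lift_inj) l0 andbT; case: (i == j).
Qed.

Lemma linM_kdot0 : v = 0 -> M = M ord0 ord0 *: delta_mx ord0 ord0.
Proof.
move=> Hv.
have Hc i : H i ord0 = 0.
  by have := congr1 (fun A : 'cV[R]_(n.+1) => A i 0) Hv; rewrite !mxE.
have iC0 : iC * RtoC 0 = 0 by rewrite /GRing.mul /= /Cmul /C0 /=; congr Cx; cbn; ring.
have Nr c : N ord0 c = 0 by rewrite !mxE eqxx andbF -[H]H_sym mxE Hc add0r iC0.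
have Nc r : N^T ord0 r = 0 by rewrite !mxE andbN Hc add0r iC0.
apply/matrixP=> i j; rewrite !mxE.
have [->|i0] := eqVneq i ord0; last by rewrite (cofactor_eq0_row _ _ Nr) 1?eq_sym // !mulr0.
have [->|j0] := eqVneq j ord0; first by rewrite mulr1.
by rewrite -cofactor_tr (cofactor_eq0_row _ _ Nc) 1?eq_sym // !mulr0.
Qed.

Hypothesis Im_eN : Im eN = 0.

Lemma linM_kdot : M *m v = 0.
Proof.
have Ne0 : N *m delta_mx ord0 0 = iC *: map_mx RtoC v.
  by rewrite -colE; apply/matrixP=> i j; rewrite !mxE andbN add0r.
have iy : iC *: (expi (Ropp theta) *: \adj N *m map_mx RtoC v) = eN *: delta_mx ord0 0.
  rewrite -scalemxAl scalerA [iC * _]mulrC -!scalerA; congr (_ *: _).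
  by rewrite scalemxAr -Ne0 mulmxA mul_adj_mx mul_scalar_mx.
apply/matrixP=> i j; rewrite linM_adj -Re_mul_real !mxE Re_iC_mul.
have := congr1 (fun A : 'cV[C]_(n.+1) => Im (A i j)) iy; rewrite !mxE => ->.
by rewrite Im_mul_natr Im_eN mul0r.
Qed.

Lemma linM_system (w : 'cV[R]_(n.+1)) : exists p q : 'cV[R]_(n.+1),
  [/\ M *m w = p, Re eN *: w = In_real n *m p - H *m q & In_real n *m q + H *m p = 0].
Proof.
set y := expi (Ropp theta) *: \adj N *m map_mx RtoC w.
have Ny : N *m y = RtoC (Re eN) *: map_mx RtoC w.
  rewrite /y -scalemxAl -scalemxAr mulmxA mul_mx_adj mul_scalar_mx scalerA.
  by rewrite -(C_real Im_eN).
exists (map_mx Re y), (map_mx Im y); split; first by rewrite linM_adj -Re_mul_real.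
  have := congr1 (map_mx Re) Ny; rewrite Re_mulmx Re_plus_iH Im_plus_iH => ->.
  by apply/matrixP=> i j; rewrite !mxE; cbn; ring.
have := congr1 (map_mx Im) Ny; rewrite Im_mulmx Re_plus_iH Im_plus_iH => ->.
by apply/matrixP=> i j; rewrite !mxE; cbn; ring.
Qed.

Section KdotNonzero.
Hypothesis M00_gt0 : Rlt 0 (M ord0 ord0).
Hypothesis v_neq0 : v != 0.

Lemma Re_eN_gt0 : Rlt 0 (Re eN).
Proof.
have [p [q [Mp Re_eq Im_eq]]] := linM_system (delta_mx ord0 0).
have quad := real_system_quad H_sym Re_eq Im_eq.
have p00 : ((delta_mx ord0 (0 : 'I_1))^T *m p) 0 0 = M ord0 ord0.
  by rewrite -Mp trmx_delta -rowE -colE !mxE.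
have [hl|//] := Rle_or_lt (Re eN) 0.
have sum0 : xnorm2 p + xnorm2 q = 0.
  move: (xnorm2_ge0 p) (xnorm2_ge0 q) quad M00_gt0 hl; rewrite p00; cbn => *; nra.
have [p0 _] := real_system_xnorm2_eq0 Re_eq Im_eq v_neq0 sum0.
by move: M00_gt0; rewrite -p00 p0 mulmx0 mxE; cbn; lra.
Qed.

Lemma linM_psd : psd M.
Proof.
move=> w; have [p [q [Mp Re_eq Im_eq]]] := linM_system w.
have quad := real_system_quad H_sym Re_eq Im_eq.
rewrite -mulmxA Mp; move: quad (xnorm2_ge0 p) (xnorm2_ge0 q) Re_eN_gt0.
by move: ((w^T *m p) 0 0) (xnorm2 p) (xnorm2 q) (Re eN) => a s t l; cbn => *; nra.
Qed.

Lemma linM_ker (w : 'cV[R]_(n.+1)) : M *m w = 0 <-> exists c : R, w = c *: v.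
Proof.
split; last by case=> c ->; rewrite -scalemxAr linM_kdot scaler0.
move=> Mw; have [p [q [Mp Re_eq Im_eq]]] := linM_system w.
have quad := real_system_quad H_sym Re_eq Im_eq.
have sum0 : xnorm2 p + xnorm2 q = 0 by rewrite -quad -Mp Mw mulmx0 mxE mulr0.
have [_ lam_w] := real_system_xnorm2_eq0 Re_eq Im_eq v_neq0 sum0.
have lam_neq0 : Re eN != 0 by apply/eqP => h; move: Re_eN_gt0; rewrite h; cbn; lra.
by exists ((Re eN)^-1 * - q 0 0); rewrite -scalerA -lam_w scalerA mulVf ?scale1r.
Qed.

Lemma linM_mup0 : mup 0 (char_poly M) = 1%N.
Proof.
apply: (mup0_char_poly_eq1 v_neq0 linM_kdot (psd_ker_det_add linM_sym linM_psd v_neq0 _)).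
by move=> w /linM_ker.
Qed.

End KdotNonzero.

End LinearizedOperator.

Theorem theorem4p1 (n : nat) (D : pt n -> Prop) (theta : R)
    (k : pt n.+1 -> R) (Dk : 'I_n.+1 -> pt n.+1 -> R)
    (D2k : 'I_n.+1 -> 'I_n.+1 -> pt n.+1 -> R) :
  is_domain D ->
  Rlt (Ropp PI) theta -> Rle theta PI ->
  C2_on (Omega D) k Dk D2k ->
  (forall z, Omega D z ->
     Im (expi (Ropp theta) * \det (plus_iH (In_mx n) (hess D2k z))) = R0 /\
     Rlt R0 (Re (expi (Ropp theta) * \det (plus_iH 1%:M (xblock (hess D2k z)))))) ->
  forall z, Omega D z ->
    let M := linM theta (hess D2k z) in
    let v := grad_kdot D2k z in
    (v != 0 ->
       psd M /\ mup 0 (char_poly M) = 1%N /\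
       (forall w : 'cV[R]_(n.+1), M *m w = 0 <-> exists c : R, w = c *: v)) /\
    (v = 0 ->
       psd M /\ mup 0 (char_poly M) = n).
Proof.
move=> [_ [D_open _]] _ _ k_C2 hyp z Oz M v.
have H_sym : (hess D2k z)^T = hess D2k z.
  by apply/matrixP=> i j; rewrite !mxE (mixed_partials_sym_Omega _ _ D_open k_C2 Oz).
have [Im_eN M00_gt0] := hyp z Oz; rewrite -linM00 in M00_gt0.
have vE : v = \col_j hess D2k z j ord0 by apply/matrixP => i j; rewrite !mxE.
rewrite /M vE; split => v0.
  split; first exact: linM_psd.
  by split; [exact: linM_mup0 | exact: linM_ker].
rewrite (linM_kdot0 theta H_sym v0); split; first exact/psd_scale_delta/Rlt_le.
by apply: mup0_char_poly_scale_delta; apply/eqP => h; move: M00_gt0; rewrite h; cbn; lra.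
Qed.
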